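(* Let $\lambda$ be a partition with at most $n$ positive parts, and let $n'\geq n$. If the poset $\mathcal B_\lambda^n$ is not a lattice, then the poset $\mathcal B_\lambda^{n'}$ is not a lattice.
   Context: For $N\geq 1$ and a partition $\nu$ with at most $N$ positive parts, $\mathcal B_\nu^N$ is the set of semistandard Young tableaux of shape $\nu$ (rows weakly increasing, columns strictly increasing) with entries in $\{1,\ldots,N+1\}$, partially ordered by the reflexive transitive closure of $T<F_i(T)$ for $i\in\{1,\ldots,N\}$ with $F_i(T)\neq 0$. Here $F_i$ is the type A crystal lowering operator: in the reading word of $T$ (rows read from bottom to top, each row left to right) keep only letters $i$ and $i+1$, replace each $i$ by '')'' and each $i+1$ by ''('', and match parentheses in the usual way; if there is no unmatched '')'', $F_i(T)=0$; otherwise $F_i(T)$ is obtained by changing the entry $i$ corresponding to the rightmost unmatched '')'' into $i+1$. *)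

From mathcomp Require Import all_boot.
From Stdlib Require Import Relations.

Set Implicit Arguments.
Unset Strict Implicit.
Unset Printing Implicit Defensive.

(* A partition: a weakly decreasing sequence of positive integers
   (its length is its number of positive parts). *)
Definition is_partition (nu : seq nat) : bool :=
  sorted geq nu && all (fun k => 0 < k) nu.

(* A tableau is given by its rows, top row first. *)
Definition tableau := seq (seq nat).

Definition is_ssyt (N : nat) (nu : seq nat) (T : tableau) : bool :=
  [&& map size T == nu,
      all (fun r => sorted leq r) T,
      all (fun r => all (fun a => (1 <= a) && (a <= N.+1)) r) T &
      all (fun k => all (fun c => nth 0 (nth [::] T k) c < nth 0 (nth [::] T k.+1) c)
                        (iota 0 (size (nth [::] T k.+1))))
          (iota 0 (size T))].

Definition B (N : nat) (nu : seq nat) (T : tableau) : Prop := is_ssyt N nu T.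

Definition reading_word (T : tableau) : seq nat := flatten (rev T).

(* Position (in the word) of the rightmost unmatched ")" (= letter i),
   where each i.+1 is "(" and each i is ")"; "open" counts the currently
   unmatched "(" to the left. *)
Fixpoint rightmost_unmatched (i : nat) (w : seq nat) (open pos : nat)
    (last : option nat) : option nat :=
  match w with
  | [::] => last
  | a :: w' =>
      if a == i.+1 then rightmost_unmatched i w' open.+1 pos.+1 last
      else if a == i then
        (if 0 < open then rightmost_unmatched i w' open.-1 pos.+1 last
         else rightmost_unmatched i w' open pos.+1 (Some pos))
      else rightmost_unmatched i w' open pos.+1 last
  end.

(* Crystal lowering operator F_i; None plays the role of 0. *)
Definition F (i : nat) (T : tableau) : option tableau :=
  let w := reading_word T in
  match rightmost_unmatched i w 0 0 None with
  | None => None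
  | Some p =>
      Some (rev (reshape (map size (rev T)) (set_nth 0 w p i.+1)))
  end.

Definition crystal_step (N : nat) (T T' : tableau) : Prop :=
  exists i, 1 <= i <= N /\ F i T = Some T'.

Definition crystal_le (N : nat) : relation tableau :=
  clos_refl_trans tableau (crystal_step N).

Definition is_join N nu (x y z : tableau) : Prop :=
  B N nu z /\ crystal_le N x z /\ crystal_le N y z /\
  forall w, B N nu w -> crystal_le N x w -> crystal_le N y w -> crystal_le N z w.

Definition is_meet N nu (x y z : tableau) : Prop :=
  B N nu z /\ crystal_le N z x /\ crystal_le N z y /\
  forall w, B N nu w -> crystal_le N w x -> crystal_le N w y -> crystal_le N w z.

Definition is_lattice (N : nat) (nu : seq nat) : Prop :=
  forall x y, B N nu x -> B N nu y ->
    (exists z, is_join N nu x y z) /\ (exists z, is_meet N nu x y z).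

From Stdlib Require Import Relations.
From mathcomp Require Import all_boot zify.

Set Implicit Arguments.
Unset Strict Implicit.
Unset Printing Implicit Defensive.

(* B^n sits inside B^n' in two ways.  Tableaux with entries at most n+1 form an
   order ideal of B^n', since F_i only turns one entry i into i+1.  Adding n'-n
   to every entry maps B^n onto the tableaux with entries at least n'-n+1, an
   order filter, since F_(n'-n+i) commutes with this shift.  Both maps are order
   embeddings, so B^n inherits meets from the first and joins from the second. *)

Definition is_lub (T : Type) (S : T -> Prop) (le : relation T) (x y z : T) : Prop :=
  S z /\ le x z /\ le y z /\ forall w, S w -> le x w -> le y w -> le z w.

Definition has_lubs (T : Type) (S : T -> Prop) (le : relation T) : Prop :=
  forall x y, S x -> S y -> exists z, is_lub S le x y z.

Section LubsOfUpperSet.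
Variables (T U : Type) (S : T -> Prop) (S' : U -> Prop).
Variables (le : relation T) (le' : relation U) (f : T -> U).
Hypothesis f_inj : injective f.
Hypothesis f_S : forall x, S x -> S' (f x).
Hypothesis f_mono : forall x y, le x y -> le' (f x) (f y).
Hypothesis f_upper : forall x c, S x -> S' c -> le' (f x) c ->
  exists y, [/\ c = f y, S y & le x y].

Lemma has_lubs_upper : has_lubs S' le' -> has_lubs S le.
Proof.
move=> lubs x y Sx Sy.
have [z [S'z [le_xz [le_yz z_least]]]] := lubs _ _ (f_S Sx) (f_S Sy).
have [z0 [ez Sz0 le_xz0]] := f_upper Sx S'z le_xz; subst z.
have [z1 [/f_inj <- _ le_yz0]] := f_upper Sy S'z le_yz.
exists z0; split=> //; split=> //; split=> // w Sw le_xw le_yw.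
have le_zw := z_least _ (f_S Sw) (f_mono le_xw) (f_mono le_yw).
by have [w0 [/f_inj -> _]] := f_upper Sz0 (f_S Sw) le_zw.
Qed.

End LubsOfUpperSet.

Lemma is_latticeE N nu :
  is_lattice N nu <->
  has_lubs (B N nu) (crystal_le N) /\ has_lubs (B N nu) (transp _ (crystal_le N)).
Proof.
split=> [lat | [joins meets] x y Bx By]; last by split; [apply: joins | apply: meets].
by split=> x y Bx By; have [] := lat x y Bx By.
Qed.

Lemma all_reading_word (P : pred nat) T : all P (reading_word T) = all (all P) T.
Proof.
elim: T => //= r T IH.
by rewrite /reading_word rev_cons flatten_rcons all_cat -/(reading_word T) IH andbC.
Qed.

Definition entries_le (m : nat) (T : tableau) : bool := all (leq^~ m) (reading_word T).
Definition entries_ge (l : nat) (T : tableau) : bool := all (leq l) (reading_word T).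

Lemma all_entries_range l m T :
  all (all (fun a => (l <= a) && (a <= m))) T = entries_ge l T && entries_le m T.
Proof. by rewrite /entries_ge /entries_le -!all_reading_word -all_predI. Qed.

Lemma ssyt_boundE N N' nu T : N <= N' ->
  is_ssyt N nu T = is_ssyt N' nu T && entries_le N.+1 T.
Proof.
move=> le_NN'; rewrite /is_ssyt !all_entries_range.
case bnd: (entries_le N.+1 T); last by rewrite !andbF.
have -> : entries_le N'.+1 T by apply: sub_all bnd => a /leq_trans; apply.
by rewrite !andbT.
Qed.

Lemma ssyt_entries_ge N nu T : is_ssyt N nu T -> entries_ge 1 T.
Proof. by case/and4P=> _ _; rewrite all_entries_range => /andP[]. Qed.

Lemma rightmost_unmatched_Some i w o pos last p :
  rightmost_unmatched i w o pos last = Some p ->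
  last = Some p \/ exists q, [/\ p = pos + q, q < size w & nth 0 w q = i].
Proof.
elim: w o pos last => [|a w IH] o pos last /=; first by left.
have step_pos o' last' : rightmost_unmatched i w o' pos.+1 last' = Some p ->
    last' = Some p \/ exists q, [/\ p = pos + q, q < (size w).+1 & nth 0 (a :: w) q = i].
  case/IH=> [-> | [q [-> ? ?]]]; first by left.
  by right; exists q.+1; rewrite addSnnS; split.
case: eqP => _; first exact: step_pos.
case: eqP => [a_i | _]; last exact: step_pos.
case: ifP => _; first exact: step_pos.
by case/step_pos=> [[<-] | ?]; right=> //; exists 0; rewrite addn0 a_i.
Qed.

Lemma F_reading_word i T T' : F i T = Some T' ->
  exists w1 w2, reading_word T = w1 ++ i :: w2 /\ reading_word T' = w1 ++ i.+1 :: w2.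
Proof.
rewrite /F; case E: rightmost_unmatched => [p|] // [<-].
have [|[q [-> p_lt p_i]]] := rightmost_unmatched_Some E => //; set w := reading_word T.
exists (take q w), (drop q.+1 w); split.
  by rewrite -p_i -drop_nth // cat_take_drop.
rewrite {1}/reading_word revK reshapeKr; first by rewrite set_nthE p_lt.
by rewrite size_set_nth (maxn_idPr p_lt) size_flatten.
Qed.

Lemma F_entries_le i m T T' : F i T = Some T' ->
  entries_le m T' -> entries_le m T /\ i < m.
Proof.
case/F_reading_word=> w1 [w2 [eT eT']]; rewrite /entries_le eT eT' !all_cat /=.
by case/and3P=> -> lt_im ->; rewrite ltnW.
Qed.

Lemma F_entries_ge i l T T' : F i T = Some T' ->
  entries_ge l T -> entries_ge l T' /\ l <= i.
Proof.
case/F_reading_word=> w1 [w2 [eT eT']]; rewrite /entries_ge eT eT' !all_cat /=.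
by case/and3P=> -> le_li ->; rewrite leqW.
Qed.

Lemma crystal_le_widen N N' a b : N <= N' -> crystal_le N a b -> crystal_le N' a b.
Proof.
move=> le_NN'; elim=> [x y [i [i_range Fi]] | x | x y z _ le_xy _ le_yz].
- by apply: rt_step; exists i; split=> //; lia.
- exact: rt_refl.
- exact: rt_trans le_xy le_yz.
Qed.

Lemma crystal_le_restrict N N' a b : crystal_le N' a b -> entries_le N.+1 b ->
  entries_le N.+1 a /\ crystal_le N a b.
Proof.
elim=> [x y [i [i_range Fi]] | x | x y z _ IHxy _ IHyz] bnd.
- have [bnd_x lt_iN] := F_entries_le Fi bnd.
  by split=> //; apply: rt_step; exists i; split=> //; lia.
- by split=> //; apply: rt_refl.
- have [bnd_y le_yz] := IHyz bnd; have [bnd_x le_xy] := IHxy bnd_y.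
  by split=> //; apply: rt_trans le_xy le_yz.
Qed.

Lemma has_meets_restrict N N' nu : N <= N' ->
  has_lubs (B N' nu) (transp _ (crystal_le N')) ->
  has_lubs (B N nu) (transp _ (crystal_le N)).
Proof.
move=> le_NN'; apply: (has_lubs_upper (f := id)) => // [x Bx | x y | x c Bx B'c le_cx].
- by move: Bx; rewrite /B (ssyt_boundE _ _ le_NN') => /andP[].
- exact: crystal_le_widen.
- have bnd_x : entries_le N.+1 x.
    by move: Bx; rewrite /B (ssyt_boundE _ _ (leqnn N)) => /andP[].
  have [bnd_c le_cx'] := crystal_le_restrict le_cx bnd_x.
  by exists c; split=> //; rewrite /B (ssyt_boundE _ _ le_NN') B'c.
Qed.

Definition shift (k : nat) (T : tableau) : tableau := map (map (addn k)) T.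

Lemma shift_inj k : injective (shift k).
Proof. exact/inj_map/inj_map/addnI. Qed.

Lemma reading_word_shift k T : reading_word (shift k T) = map (addn k) (reading_word T).
Proof. by rewrite /reading_word /shift map_flatten map_rev. Qed.

Lemma rightmost_unmatched_shift k i w o pos last :
  rightmost_unmatched (k + i) (map (addn k) w) o pos last =
  rightmost_unmatched i w o pos last.
Proof. by elim: w o pos last => //= a w IH o pos last; rewrite -addnS !eqn_add2l !IH. Qed.

Lemma F_shift k i T : F (k + i) (shift k T) = omap (shift k) (F i T).
Proof.
rewrite /F reading_word_shift rightmost_unmatched_shift.
case E: rightmost_unmatched => [p|] //=.
have [|[q [-> p_lt _]]] := rightmost_unmatched_Some E => //.
have -> : map size (rev (shift k T)) = map size (rev T).
  by rewrite /shift -map_rev -map_comp; apply: eq_map => r /=; rewrite size_map.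
by rewrite /shift [in RHS]map_rev map_reshape add0n -addnS !set_nthE size_map p_lt
  map_cat /= map_take map_drop.
Qed.

Lemma crystal_le_shift k N x y :
  crystal_le N x y -> crystal_le (k + N) (shift k x) (shift k y).
Proof.
elim=> [a b [i [i_range Fi]] | a | a b c _ le_ab _ le_bc].
- by apply: rt_step; exists (k + i); split; [lia | rewrite F_shift Fi].
- exact: rt_refl.
- exact: rt_trans le_ab le_bc.
Qed.

Lemma entries_ge_shift k l T : entries_ge (k + l) (shift k T) = entries_ge l T.
Proof.
by rewrite /entries_ge reading_word_shift all_map; apply: eq_all => a /=; rewrite leq_add2l.
Qed.

Lemma entries_le_shift k m T : entries_le (k + m) (shift k T) = entries_le m T.
Proof.
by rewrite /entries_le reading_word_shift all_map; apply: eq_all => a /=; rewrite leq_add2l.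
Qed.

Lemma crystal_le_shift_upper k N x c : crystal_le (k + N) (shift k x) c ->
  entries_ge 1 x -> exists y, [/\ c = shift k y, entries_ge 1 y & crystal_le N x y].
Proof.
move eq_a: (shift k x) => a le_ac; elim: le_ac x eq_a => {a c}
  [a b [i [i_range Fi]] | a | a b c _ IHab _ IHbc] x eq_a ge_x; subst a.
- have ge_kx : entries_ge (k + 1) (shift k x) by rewrite entries_ge_shift.
  have [_ lt_ki] := F_entries_ge Fi ge_kx; rewrite addn1 in lt_ki.
  move: Fi; rewrite -(subnKC lt_ki) addSnnS F_shift.
  case Fx: F => [y|] //= [<-]; exists y; split=> //.
    exact: (F_entries_ge Fx ge_x).1.
  by apply: rt_step; eexists; split; last exact: Fx; lia.
- by exists x; split=> //; apply: rt_refl.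
- have [y [eq_b ge_y le_xy]] := IHab x erefl ge_x.
  have [z [-> ge_z le_yz]] := IHbc y (esym eq_b) ge_y.
  by exists z; split=> //; apply: rt_trans le_xy le_yz.
Qed.

Lemma nth_shift k T r : nth [::] (shift k T) r = map (addn k) (nth [::] T r).
Proof.
case: (ltnP r (size T)) => r_T; first by rewrite (nth_map [::]).
by rewrite !nth_default ?size_map.
Qed.

(* A missing entry of the upper row reads as 0, before and after the shift. *)
Lemma ltn_nth_shift k r0 r1 c : c < size r1 -> 0 < nth 0 r1 c ->
  (nth 0 (map (addn k) r0) c < nth 0 (map (addn k) r1) c) = (nth 0 r0 c < nth 0 r1 c).
Proof.
move=> c_r1 pos_r1; rewrite (nth_map 0 _ _ c_r1).
case: (ltnP c (size r0)) => c_r0; first by rewrite (nth_map 0 _ _ c_r0) ltn_add2l.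
by rewrite (nth_default 0 c_r0) nth_default ?size_map // pos_r1 ltn_addl.
Qed.

Lemma ssyt_shift k N nu T : entries_ge 1 T ->
  is_ssyt (k + N) nu (shift k T) = is_ssyt N nu T.
Proof.
move=> ge_T; rewrite /is_ssyt.
have -> : map size (shift k T) = map size T.
  by rewrite -map_comp; apply: eq_map => r /=; rewrite size_map.
have -> : all (sorted leq) (shift k T) = all (sorted leq) T.
  by rewrite all_map; apply: eq_all => r /=; rewrite (mono_sorted (leq_add2l k)).
rewrite !all_entries_range -addnS entries_le_shift ge_T.
have -> : entries_ge 1 (shift k T).
  have : entries_ge (k + 1) (shift k T) by rewrite entries_ge_shift.
  by apply: sub_all => a; apply: leq_trans; rewrite addn1.
rewrite size_map; congr [&& _, _, _ & _]; apply: eq_all => r.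
rewrite !nth_shift size_map; apply: eq_in_all => c; rewrite mem_iota => /andP[_ c_r].
apply: ltn_nth_shift => //; move: ge_T; rewrite /entries_ge all_reading_word => /allP.
case: (ltnP r.+1 (size T)) => [r_T | T_r]; last by rewrite nth_default in c_r.
by move/(_ _ (mem_nth [::] r_T))/allP; apply; apply: mem_nth.
Qed.

Lemma has_joins_shift k N nu :
  has_lubs (B (k + N) nu) (crystal_le (k + N)) -> has_lubs (B N nu) (crystal_le N).
Proof.
apply: (has_lubs_upper (@shift_inj k)) => [x Bx | x y | x c Bx B'c le_xc].
- by rewrite /B ssyt_shift //; apply: ssyt_entries_ge Bx.
- exact: crystal_le_shift.
- have [y [eq_c ge_y le_xy]] := crystal_le_shift_upper le_xc (ssyt_entries_ge Bx).
  by exists y; split=> //; move: B'c; rewrite /B eq_c ssyt_shift.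
Qed.

Theorem lemma5p3 (lam : seq nat) (n n' : nat) :
  1 <= n -> is_partition lam -> size lam <= n -> n <= n' ->
  ~ is_lattice n lam -> ~ is_lattice n' lam.
Proof.
move=> _ _ _ le_nn' not_lattice /is_latticeE [joins' meets']; apply: not_lattice.
apply/is_latticeE; split; last exact: has_meets_restrict meets'.
by apply: (@has_joins_shift (n' - n)); rewrite subnK.
Qed.
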